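(* Let $(\mathcal{B},d)$ be a dg-coalgebra over a field $k$ with counit, and let $M$ be a graded $k$-vector space. Let $d_M$ be a differential on the free (cofree) $\mathcal{B}$-comodule $\mathcal{B}\otimes M$ making it a dg-comodule over $\mathcal{B}$, and let $\overline{d}_M:\mathcal{B}\otimes M\to M$ be its component (so $d_M(b\otimes m)=(\mathrm{id}\otimes\overline{d}_M)(\Delta(b)\otimes m)+db\otimes m$). Consider $\operatorname{Hom}_{gr}(\mathcal{B},M)$ as a right module over the dual graded algebra $\mathcal{B}^*$ via $\phi\cdot b^*=(\phi\otimes b^* )\circ\Delta$. Then the map $$d_M^{\vee}(\phi)(b)=\sum_i(-1)^{\deg b_i\deg\phi}\,\overline{d}_M(b_i\otimes\phi(b_i'))-(-1)^{\deg\phi}\phi(db),\qquad \Delta(b)=\sum_ib_i\otimes b_i',$$ is a differential of degree $1$ making $\operatorname{Hom}_{gr}(\mathcal{B},M)$ a right dg-module over the dg-algebra $(\mathcal{B}^*,d)$. Moreover, this construction extends to a dg-functor from the dg-category of dg-comodules over $\mathcal{B}$ that are free as $\mathcal{B}$-comodules to the dg-category of right dg-modules over $\mathcal{B}^*$, sending a comodule morphism $f:\mathcal{B}\otimes M\to\mathcal{B}\otimes M'$ with component $\overline{f}:\mathcal{B}\otimes M\to M'$ to $f^{\vee}(\phi)(b)=\sum_i(-1)^{\deg b_i\deg\phi}\overline{f}(b_i\otimes\phi(b_i'))$.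
   Context: For graded vector spaces $V,W$, $\operatorname{Hom}_{gr}(V,W)=\bigoplus_n\operatorname{Hom}(V,W)_n$ with $\operatorname{Hom}(V,W)_n=\prod_i\operatorname{Hom}(V_i,W_{i+n})$. The dual dg-algebra $\mathcal{B}^*$ has differential $(db^* )(b)=(-1)^{\deg b}b^*(db)$ and product $(b_1^*b_2^* )(b)=\sum_i(-1)^{\deg b_i\deg b_i'}b_1^*(b_i)b_2^*(b_i')$. In the dg-category of dg-comodules (resp. dg-modules), $\operatorname{Hom}^n$ consists of degree $n$ comodule (resp. module) maps, with differential $f\mapsto d\circ f-(-1)^{\deg f}f\circ d$ and composition of maps. *)

(* Graded vector spaces, dg-coalgebras, free dg-comodules
   and the dual dg-algebra, encoded without a tensor-product library:
   elements of a graded tensor product are represented by finite lists of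
   homogeneous pure tensors ("Sweedler lists"), and equality of tensors is
   equality under all (graded) bilinear maps, i.e. the universal property. *)
From HB Require Import structures.
From mathcomp Require Import all_boot all_order all_algebra.
Unset Printing Implicit Defensive.
Import Order.TTheory GRing.Theory Num.Theory.
Local Open Scope ring_scope.

Section Defs.
Context {k : fieldType}.

Definition sgn (z : int) : k := (-1) ^+ absz z.

Definition lin {U V : lmodType k} (f : U -> V) :=
  forall (a : k) (x y : U), f (a *: x + y) = a *: f x + f y.

(* A graded vector space is a family V : int -> lmodType k.
   gcast a b x : for x in V_a, the component of x in V_b (x if a = b, else 0) *)
Definition gcast {V : int -> lmodType k} {a : int} (b : int) : V a -> V b :=
  match a =P b with
  | ReflectT e => fun x => eq_rect a (fun i => (V i : Type)) x b e
  | ReflectF _ => fun _ => 0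
  end.

(* Representatives of elements of (A (x) C)_n = (+)_p A_p (x) C_{n-p} *)
Definition tens (A C : int -> lmodType k) (n : int) :=
  seq {p : int & (A p * C (n - p))%type}.

Definition tev {A C : int -> lmodType k} {W : lmodType k}
  (G : forall p q, A p -> C q -> W) {n : int} (t : tens A C n) : W :=
  \sum_(e <- t) G (tag e) (n - tag e) (tagged e).1 (tagged e).2.

Definition bilin {A C : int -> lmodType k} {W : lmodType k}
  (G : forall p q, A p -> C q -> W) :=
  forall p q, (forall y, lin (fun x => G p q x y)) /\ (forall x, lin (G p q x)).

Definition trilin {A A' C : int -> lmodType k} {W : lmodType k}
  (H : forall p q r, A p -> A' q -> C r -> W) :=
  forall p q r, [/\ forall y z, lin (fun x => H p q r x y z),
                    forall x z, lin (fun y => H p q r x y z)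
                  & forall x y, lin (H p q r x y)].

Definition teq {A C : int -> lmodType k} {n : int} (t1 t2 : tens A C n) :=
  forall (W : lmodType k) (G : forall p q, A p -> C q -> W),
    bilin G -> tev G t1 = tev G t2.

Definition tscale {A C : int -> lmodType k} (c : k) {n : int} (t : tens A C n)
  : tens A C n :=
  [seq existT (fun p => (A p * C (n - p))%type) (tag e)
       (c *: (tagged e).1, (tagged e).2) | e <- t].

Record dgcoalg (B : int -> lmodType k) := DGCoalg {
  cop : forall i, B i -> tens B B i;
  eps : forall i, B i -> k^o;
  dB  : forall i, B i -> B (i + 1) }.
Arguments cop {_} _ {_}.
Arguments eps {_} _ {_}.
Arguments dB {_} _ {_}.

Record is_dgcoalg {B : int -> lmodType k} (C : dgcoalg B) : Prop := {
  dB_lin : forall i, lin (@dB B C i);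
  dB_sq : forall i b, dB C (dB C b) = 0 :> B (i + 1 + 1);
  eps_lin : forall i, lin (@eps B C i);
  eps_deg : forall i, i != 0 -> forall b, @eps B C i b = 0;
  eps_dB : forall i b, eps C (@dB B C i b) = 0;
  cop_lin : forall (W : lmodType k) (G : forall p q, B p -> B q -> W),
      bilin G -> forall i, lin (fun b => tev G (@cop B C i b));
  coassoc : forall (W : lmodType k) (H : forall p q r, B p -> B q -> B r -> W),
      trilin H -> forall i (b : B i),
      tev (fun p q x y => tev (fun p' q' x1 x2 => H p' q' q x1 x2 y) (cop C x))
          (cop C b)
    = tev (fun p q x y => tev (fun p' q' y1 y2 => H p p' q' x y1 y2) (cop C y))
          (cop C b);
  counit_l : forall (W : lmodType k) (L : forall q, B q -> W),
      (forall q, lin (L q)) -> forall i (b : B i),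
      tev (fun p q x y => eps C x *: L q y) (cop C b) = L i b;
  counit_r : forall (W : lmodType k) (L : forall q, B q -> W),
      (forall q, lin (L q)) -> forall i (b : B i),
      tev (fun p q x y => eps C y *: L p x) (cop C b) = L i b;
  coder : forall (W : lmodType k) (G : forall p q, B p -> B q -> W),
      bilin G -> forall i (b : B i),
      tev G (cop C (dB C b))
    = tev (fun p q x y => G (p + 1) q (dB C x) y + sgn p *: G p (q + 1) x (dB C y))
          (cop C b) }.

(* ---------- maps between free comodules B (x) M -> B (x) M' ----------
   f p r s x m  represents the degree-s component of f(x (x) m). *)
Definition tmap (B M M' : int -> lmodType k) :=
  forall p r s, B p -> M r -> tens B M' s.

Definition text {B M M' : int -> lmodType k} (F : tmap B M M') {n : int}
  (t : tens B M n) (s : int) : tens B M' s :=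
  flatten [seq F (tag e) (n - tag e) s (tagged e).1 (tagged e).2 | e <- t].

(* g o f, for f of degree n *)
Definition tcomp {B M M' M'' : int -> lmodType k} (n : int)
  (g : tmap B M' M'') (f : tmap B M M') : tmap B M M'' :=
  fun p r s x m => text g (f p r (p + r + n) x m) s.

Definition tid {B M : int -> lmodType k} : tmap B M M :=
  fun p r s x m => [:: existT (fun a => (B a * M (s - a))%type) p (x, gcast (s - p) m)].

Definition tmlin {B M M' : int -> lmodType k} (c : k) (f g : tmap B M M')
  : tmap B M M' := fun p r s x m => tscale c (f p r s x m) ++ g p r s x m.

Record is_tmap {B M M' : int -> lmodType k} (n : int) (f : tmap B M M') : Prop := {
  tmap_bilin : forall (W : lmodType k) (G : forall p q, B p -> M' q -> W),
      bilin G -> forall s, bilin (fun p r x m => tev G (f p r s x m));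
  tmap_deg : forall p r s, s != p + r + n -> forall x m, teq (f p r s x m) [::] }.

(* f is a comodule map of degree n: (Delta (x) id) o f = (id (x) f) o (Delta (x) id),
   with the Koszul sign *)
Definition is_comodmap {B M M' : int -> lmodType k} (C : dgcoalg B) (n : int)
  (f : tmap B M M') :=
  forall (W : lmodType k) (H : forall p q r, B p -> B q -> M' r -> W), trilin H ->
  forall p r (x : B p) (m : M r),
    tev (fun q t y m' => tev (fun a c y1 y2 => H a c t y1 y2 m') (cop C y))
        (f p r (p + r + n) x m)
  = tev (fun a c x1 x2 => sgn (n * a) *:
           tev (fun q t y m' => H a q t x1 y m') (f c r (p + r + n - a) x2 m))
        (cop C x).

(* dM is a coderivation: (Delta (x) id) o dM = (d_B (x) id + id (x) dM) o (Delta (x) id) *)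
Definition is_coder {B M : int -> lmodType k} (C : dgcoalg B) (dM : tmap B M M) :=
  forall (W : lmodType k) (H : forall p q r, B p -> B q -> M r -> W), trilin H ->
  forall p r (x : B p) (m : M r),
    tev (fun q t y m' => tev (fun a c y1 y2 => H a c t y1 y2 m') (cop C y))
        (dM p r (p + r + 1) x m)
  = tev (fun a c x1 x2 => H (a + 1) c r (dB C x1) x2 m + sgn a *:
           tev (fun q t y m' => H a q t x1 y m') (dM c r (p + r + 1 - a) x2 m))
        (cop C x).

Record is_freedgcomod {B M : int -> lmodType k} (C : dgcoalg B) (dM : tmap B M M)
  : Prop := {
  dM_tmap : is_tmap 1 dM;
  dM_coder : is_coder C dM;
  dM_sq : forall p r s x m, teq (tcomp 1 dM dM p r s x m) [::] }.

Definition comp_ {B M M' : int -> lmodType k} (C : dgcoalg B) (f : tmap B M M')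
  : forall p r s, B p -> M r -> M' s :=
  fun p r s x m => tev (fun q t y m' => eps C y *: gcast s m') (f p r s x m).

(* ---------- Hom_gr(B, M) ----------
   A homogeneous element phi of degree n is given by phi i j : B_i -> M_j,
   zero unless j = i + n. *)
Definition ghom (V W : int -> lmodType k) := forall i j, V i -> W j.

Record is_ghom {V W : int -> lmodType k} (n : int) (phi : ghom V W) : Prop := {
  ghom_lin : forall i j, lin (phi i j);
  ghom_deg : forall i j, j != i + n -> forall x, phi i j x = 0 }.

Definition glin {V W : int -> lmodType k} (c : k) (phi psi : ghom V W) : ghom V W :=
  fun i j x => c *: phi i j x + psi i j x.

(* ---------- the dual dg-algebra B^# ----------
   a homogeneous element of degree m is a functional on B_{-m} *)
Definition dual (B : int -> lmodType k) := forall q, B q -> k^o.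

Record is_dhom {B : int -> lmodType k} (m : int) (bs : dual B) : Prop := {
  dhom_lin : forall q, lin (bs q);
  dhom_deg : forall q, q + m != 0 -> forall y, bs q y = 0 }.

Definition dlin {B : int -> lmodType k} (c : k) (b1 b2 : dual B) : dual B :=
  fun q y => c * b1 q y + b2 q y.

Definition ddual {B : int -> lmodType k} (C : dgcoalg B) (bs : dual B) : dual B :=
  fun q y => sgn q * bs (q + 1) (dB C y).

Definition dmul {B : int -> lmodType k} (C : dgcoalg B) (b1 b2 : dual B) : dual B :=
  fun q b => tev (fun p p' (x : B p) (y : B p') =>
                    (sgn (p * p') * (b1 p x * b2 p' y) : k^o)) (cop C b).

Definition act {B M : int -> lmodType k} (C : dgcoalg B) (m : int)
  (phi : ghom B M) (bs : dual B) : ghom B M :=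
  fun i j b => tev (fun p q x y => sgn (m * p) *: (bs q y *: phi p j x)) (cop C b).

Definition dvee {B M : int -> lmodType k} (C : dgcoalg B)
  (dbar : forall p r s, B p -> M r -> M s) (n : int) (phi : ghom B M) : ghom B M :=
  fun i j b =>
    tev (fun p q x y => sgn (p * n) *: dbar p (q + n) j x (phi q (q + n) y)) (cop C b)
    - sgn n *: phi (i + 1) j (dB C b).

Definition fvee {B M M' : int -> lmodType k} (C : dgcoalg B)
  (fbar : forall p r s, B p -> M r -> M' s) (n : int) (phi : ghom B M) : ghom B M' :=
  fun i j b =>
    tev (fun p q x y => sgn (p * n) *: fbar p (q + n) j x (phi q (q + n) y)) (cop C b).

Definition vee {B M M' : int -> lmodType k} (C : dgcoalg B) (f : tmap B M M') :=
  fvee C (comp_ C f).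

Definition tdiff {B M M' : int -> lmodType k} (n : int) (dM : tmap B M M)
  (dM' : tmap B M' M') (f : tmap B M M') : tmap B M M' :=
  fun p r s x m => tcomp n dM' f p r s x m ++ tscale (- sgn n) (tcomp 1 f dM p r s x m).

End Defs.

From HB Require Import structures.
From mathcomp Require Import all_boot all_order all_algebra.
From mathcomp Require Import ring zify.
Import Order.TTheory GRing.Theory Num.Theory.
Local Open Scope ring_scope.

(* A map f : B (x) M -> B (x) M' of free comodules is determined by its component
   fbar = (eps (x) id) o f: by the counit, f (b (x) m) = sum +- b_i (x) fbar (b_i' (x) m).
   Hence the component of a composite g o f is sum +- gbar (b_i (x) fbar (b_i' (x) m)),
   and coassociativity turns the transpose of this composite into g^vee o f^vee; the same
   coassociativity argument shows that f^vee commutes with the right B^*-action.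
   Writing d_M^vee phi = dbar^vee phi - (-1)^(deg phi) phi o d and moving d past the
   transposes with the coderivation rule for Delta o d, (d_M^vee)^2 = 0 reduces to the
   vanishing of the component of d_M o d_M, namely
   dbar (db (x) m) + sum +- dbar (b_i (x) dbar (b_i' (x) m)).
   Everything else is Koszul-sign bookkeeping. *)

Arguments eps {k B} d {i}.
Arguments cop {k B} d {i}.
Arguments dB {k B} d {i}.
Arguments dB_lin {k B C} _ i.
Arguments dB_sq {k B C} _ {i} b.
Arguments eps_lin {k B C} _ i.
Arguments eps_deg {k B C} _ {i} _ b.
Arguments cop_lin {k B C} _ {W} G _ i.
Arguments coassoc {k B C} _ {W} H _ {i} b.
Arguments counit_l {k B C} _ {W} L _ {i} b.
Arguments counit_r {k B C} _ {W} L _ {i} b.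
Arguments coder {k B C} _ {W} G _ {i} b.
Arguments tmap_bilin {k B M M' n f} _ {W G} _ s.
Arguments tmap_deg {k B M M' n f} _ {p r s} _ x m.
Arguments dM_tmap {k B M C dM} _.
Arguments dM_coder {k B M C dM} _.
Arguments dM_sq {k B M C dM} _ p r s x m.
Arguments ghom_lin {k V W n phi} _ i j.
Arguments ghom_deg {k V W n phi} _ {i j} _ x.
Arguments dhom_lin {k B m bs} _ q.
Arguments dhom_deg {k B m bs} _ {q} _ y.

Section KoszulSign.
Context {k : fieldType}.

Lemma sgnD (a b : int) : sgn (a + b) = sgn a * sgn b :> k.
Proof.
have sgnE z : sgn z = (-1 : k) ^ z.
  case: z => n; rewrite /sgn //= /exprz /= -signr_odd.
  by case: odd; rewrite ?invr1 ?invrN1 ?expr0 ?expr1.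
by rewrite !sgnE expfzDr // oppr_eq0 oner_eq0.
Qed.

Lemma sgn1 : sgn 1 = -1 :> k.
Proof. by rewrite /sgn /= expr1. Qed.

Lemma sgnK (a : int) : sgn a * sgn a = 1 :> k.
Proof. by rewrite /sgn -exprMn mulrNN mulr1 expr1n. Qed.

Lemma sgn_mod2 (a b w : int) : a = b + 2 * w -> sgn a = sgn b :> k.
Proof.
move=> ->; rewrite sgnD (_ : 2 * w = w + w); last by ring.
by rewrite sgnD sgnK mulr1.
Qed.

End KoszulSign.

Section LinearMaps.
Context {k : fieldType}.

Section Lin.
Context {U V : lmodType k} {f : U -> V}.
Hypothesis hf : lin f.

Lemma lin0 : f 0 = 0.
Proof. by apply: (@addrI _ (f 0)); have := hf 1 0 0; rewrite addr0 !scale1r addr0. Qed.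

Lemma linD x y : f (x + y) = f x + f y.
Proof. by have := hf 1 x y; rewrite !scale1r. Qed.

Lemma linZ a x : f (a *: x) = a *: f x.
Proof. by have := hf a x 0; rewrite !addr0 lin0 addr0. Qed.

Lemma lin_sum {I : Type} (r : seq I) (P : pred I) (F : I -> U) :
  f (\sum_(i <- r | P i) F i) = \sum_(i <- r | P i) f (F i).
Proof. by elim/big_rec2: _ => [|i y1 y2 _ <-]; rewrite ?lin0 ?linD. Qed.

End Lin.

Lemma linP {U V : lmodType k} {f : U -> V} :
  (forall x y, f (x + y) = f x + f y) -> (forall a x, f (a *: x) = a *: f x) -> lin f.
Proof. by move=> hD hZ a x y; rewrite hD hZ. Qed.

Lemma lin_comp {U V W : lmodType k} {f : U -> V} {g : V -> W} :
  lin f -> lin g -> lin (fun x => g (f x)).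
Proof. by move=> hf hg a x y; rewrite hf hg. Qed.

Lemma lin_scale {U V : lmodType k} {f : U -> V} c : lin f -> lin (fun x => c *: f x).
Proof. by move=> hf a x y; rewrite hf scalerDr !scalerA mulrC. Qed.

Lemma lin_add {U V : lmodType k} {f g : U -> V} :
  lin f -> lin g -> lin (fun x => f x + g x).
Proof.
move=> hf hg; apply: linP => [x y|a x].
  by rewrite (linD hf) (linD hg) addrACA.
by rewrite (linZ hf) (linZ hg) scalerDr.
Qed.

Lemma lin_scalel {U V : lmodType k} {s : U -> k^o} {v : V} :
  lin s -> lin (fun x => s x *: v).
Proof. by move=> hs a x y; rewrite hs scalerDl -scalerA. Qed.

Lemma lin_mull {U : lmodType k} {s : U -> k^o} {c : k} :
  lin s -> lin (fun x => (c * s x : k^o)).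
Proof. by move=> hs a x y; rewrite hs /GRing.scale /=; ring. Qed.

Lemma lin_mulr {U : lmodType k} {s : U -> k^o} {c : k} :
  lin s -> lin (fun x => (s x * c : k^o)).
Proof. by move=> hs a x y; rewrite hs /GRing.scale /=; ring. Qed.

End LinearMaps.

Section GradedCast.
Context {k : fieldType} {V : int -> lmodType k}.

Lemma gcast_id a (x : V a) : gcast a x = x.
Proof. by rewrite /gcast; case: eqP => // e; rewrite (eq_irrelevance e erefl). Qed.

Lemma gcast_ne a b (x : V a) : a != b -> gcast b x = 0.
Proof. by rewrite /gcast; case: eqP. Qed.

Lemma gcast_lin a b : lin (@gcast _ V a b).
Proof.
have [<-|ne] := eqVneq a b; first by move=> c x y; rewrite !gcast_id.
by move=> c x y; rewrite !gcast_ne // scaler0 addr0.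
Qed.

Lemma gcast_idem a b (x : V a) : gcast b (gcast b x) = gcast b x.
Proof.
have [<-|ne] := eqVneq a b; first by rewrite !gcast_id.
by rewrite (gcast_ne _ _ x ne) (lin0 (gcast_lin _ _)).
Qed.

Lemma eq_gcast {W : Type} (F : forall t, V t -> W) a b (x : V a) :
  a = b -> F a x = F b (gcast b x).
Proof. by move=> e; subst; rewrite gcast_id. Qed.

End GradedCast.

Section TensorEvaluation.
Context {k : fieldType}.

Section Tev.
Context {A A' : int -> lmodType k} {W : lmodType k}.
Implicit Types (G : forall p q, A p -> A' q -> W).

Lemma tev_ext {G G' n} (t : tens A A' n) :
  (forall p q (x : A p) (y : A' q), q = n - p -> G p q x y = G' p q x y) ->
  tev G t = tev G' t.
Proof. by move=> h; apply: eq_bigr => e _; apply: h. Qed.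

Lemma tev_nil {G n} : tev G ([::] : tens A A' n) = 0.
Proof. by rewrite /tev big_nil. Qed.

Lemma tev0 {n} (t : tens A A' n) : tev (fun _ _ _ _ => (0 : W)) t = 0.
Proof. by rewrite /tev big1. Qed.

Lemma tev_cat {G n} (t1 t2 : tens A A' n) : tev G (t1 ++ t2) = tev G t1 + tev G t2.
Proof. by rewrite /tev big_cat. Qed.

Lemma tev_add {G G' n} (t : tens A A' n) :
  tev (fun p q x y => G p q x y + G' p q x y) t = tev G t + tev G' t.
Proof. by rewrite /tev big_split. Qed.

Lemma tev_sub {G G' n} (t : tens A A' n) :
  tev (fun p q x y => G p q x y - G' p q x y) t = tev G t - tev G' t.
Proof. by rewrite /tev sumrB. Qed.

Lemma tev_scale c {G n} (t : tens A A' n) :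
  tev (fun p q x y => c *: G p q x y) t = c *: tev G t.
Proof. by rewrite /tev scaler_sumr. Qed.

Lemma tev_lin {W' : lmodType k} (L : W -> W') {G n} (t : tens A A' n) :
  lin L -> L (tev G t) = tev (fun p q x y => L (G p q x y)) t.
Proof. by move=> hL; rewrite /tev (lin_sum hL). Qed.

Lemma tev_tscale c {G n} (t : tens A A' n) :
  (forall p q y, lin (fun x => G p q x y)) -> tev G (tscale c t) = c *: tev G t.
Proof.
move=> hG; rewrite /tev /tscale big_map scaler_sumr; apply: eq_bigr => e _ /=.
by rewrite (linZ (hG _ _ _)).
Qed.

End Tev.

Lemma tev_scalel {A A' : int -> lmodType k} {W : lmodType k}
    (G : forall p q, A p -> A' q -> k^o) {n} (t : tens A A' n) (v : W) :
  tev G t *: v = tev (fun p q x y => G p q x y *: v) t.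
Proof. by rewrite (tev_lin (fun c : k^o => c *: v)) //; apply: lin_scalel. Qed.

Lemma tev_text {B M M' : int -> lmodType k} {W : lmodType k} (F : tmap B M M')
    (G : forall p q, B p -> M' q -> W) {n} (t : tens B M n) s :
  tev G (text F t s) = tev (fun q r y m => tev G (F q r s y m)) t.
Proof. by rewrite /tev /text big_flatten /= big_map. Qed.

Section Multilinear.
Context {A A' A'' : int -> lmodType k} {W : lmodType k}.

Lemma bilinP {G : forall p q, A p -> A' q -> W} :
  (forall p q y, lin (fun x => G p q x y)) -> (forall p q x, lin (G p q x)) -> bilin G.
Proof. by move=> h1 h2 p q; split. Qed.

Lemma bilin_linl {G : forall p q, A p -> A' q -> W} :
  bilin G -> forall p q y, lin (fun x => G p q x y).
Proof. by move=> h p q; case: (h p q). Qed.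

Lemma bilin_linr {G : forall p q, A p -> A' q -> W} :
  bilin G -> forall p q x, lin (G p q x).
Proof. by move=> h p q; case: (h p q). Qed.

Lemma trilinP {H : forall p q r, A p -> A' q -> A'' r -> W} :
  (forall p q r y z, lin (fun x => H p q r x y z)) ->
  (forall p q r x z, lin (fun y => H p q r x y z)) ->
  (forall p q r x y, lin (H p q r x y)) -> trilin H.
Proof. by move=> h1 h2 h3 p q r; split. Qed.

End Multilinear.

End TensorEvaluation.

Section GradedHom.
Context {k : fieldType} {V W : int -> lmodType k}.

Lemma ghom_ext n (phi psi : ghom V W) :
  (forall i j x, phi i j x = psi i j x) -> is_ghom n phi -> is_ghom n psi.
Proof.
move=> e [hl hd]; split=> [i j a x y|i j hj x]; rewrite -!e; [exact: hl | exact: hd].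
Qed.

Lemma glin_ghom n c (phi psi : ghom V W) :
  is_ghom n phi -> is_ghom n psi -> is_ghom n (glin c phi psi).
Proof.
move=> hp hq; split=> [i j|i j hj x]; rewrite /glin.
  exact: lin_add (lin_scale c (ghom_lin hp i j)) (ghom_lin hq i j).
by rewrite (ghom_deg hp hj) (ghom_deg hq hj) scaler0 addr0.
Qed.

End GradedHom.

Section FreeComodules.
Context {k : fieldType} {B : int -> lmodType k} {C : dgcoalg B}.
Hypothesis hC : is_dgcoalg C.

Lemma eps_gcast_bilin (M : int -> lmodType k) s :
  bilin (fun q t (y : B q) (m' : M t) => eps C y *: gcast s m').
Proof.
apply: bilinP => *; first exact/lin_scalel/(eps_lin hC).
exact/lin_scale/gcast_lin.
Qed.

Lemma tev_eps_gcast {M : int -> lmodType k} {W : lmodType k} (K : forall t, M t -> W)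
    (hK : forall t, lin (K t)) {s} (T : tens B M s) :
  tev (fun q t y m' => eps C y *: K t m') T
  = K s (tev (fun q t (y : B q) (m' : M t) => eps C y *: gcast s m') T).
Proof.
rewrite (tev_lin _ _ (hK s)); apply: tev_ext => q t y m' et.
rewrite (linZ (hK s)); have [q0|nz] := eqVneq q 0.
  by rewrite -(eq_gcast K) // et q0 subr0.
by rewrite (eps_deg hC nz) !scale0r.
Qed.

Section Component.
Context {M M' : int -> lmodType k} {n : int} {f : tmap B M M'}.
Hypothesis hf : is_tmap n f.

Lemma comp_bilin s : bilin (fun p r x m => comp_ C f p r s x m).
Proof. exact: (tmap_bilin hf (eps_gcast_bilin M' s) s). Qed.

Lemma comp_deg p r s (x : B p) (m : M r) : s != p + r + n -> comp_ C f p r s x m = 0.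
Proof. by move=> hs; rewrite /comp_ (tmap_deg hf hs x m _ _ (eps_gcast_bilin M' s)) tev_nil. Qed.

End Component.

Section CounitExpansion.
Context {M : int -> lmodType k} {W : lmodType k} {K : forall q t, B q -> M t -> W}.
Hypothesis hK : bilin K.

Lemma trilin_eps :
  trilin (fun a c t (y1 : B a) (y2 : B c) (m' : M t) => eps C y2 *: K a t y1 m').
Proof.
apply: trilinP => *.
- exact/lin_scale/(bilin_linl hK).
- exact/lin_scalel/(eps_lin hC).
- exact/lin_scale/(bilin_linr hK).
Qed.

Lemma tev_counit {s} (T : tens B M s) :
  tev K T = tev (fun q t y m' =>
              tev (fun a c y1 y2 => eps C y2 *: K a t y1 m') (cop C y)) T.
Proof.
apply: tev_ext => q t y m' _.
by rewrite (counit_r hC (fun a y1 => K a t y1 m')) // => a; apply: bilin_linl.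
Qed.

Lemma tev_eps_comp {M0 : int -> lmodType k} (F : tmap B M0 M) a (y : B a) c r s'
    (x : B c) (m : M0 r) :
  tev (fun q t y2 m' => eps C y2 *: K a t y m') (F c r s' x m)
  = K a s' y (comp_ C F c r s' x m).
Proof. exact: (tev_eps_gcast (fun t m' => K a t y m') (fun t => bilin_linr hK a t y)). Qed.

End CounitExpansion.

Lemma tev_comodmap {M M' : int -> lmodType k} {n : int} {f : tmap B M M'}
    (hcf : is_comodmap C n f) {W : lmodType k} {K : forall q t, B q -> M' t -> W}
    (hK : bilin K) {p r} (x : B p) (m : M r) :
  tev K (f p r (p + r + n) x m)
  = tev (fun a c x1 x2 => sgn (n * a) *:
           K a (p + r + n - a) x1 (comp_ C f c r (p + r + n - a) x2 m)) (cop C x).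
Proof.
rewrite (tev_counit hK) (hcf _ _ (trilin_eps hK)).
by apply: tev_ext => a c x1 x2 _; rewrite (tev_eps_comp hK).
Qed.

Lemma tev_coder {M : int -> lmodType k} {dM : tmap B M M} (hcd : is_coder C dM)
    {W : lmodType k} {K : forall q t, B q -> M t -> W} (hK : bilin K)
    {p r} (x : B p) (m : M r) :
  tev K (dM p r (p + r + 1) x m)
  = K (p + 1) r (dB C x) m +
    tev (fun a c x1 x2 => sgn a *:
           K a (p + r + 1 - a) x1 (comp_ C dM c r (p + r + 1 - a) x2 m)) (cop C x).
Proof.
rewrite (tev_counit hK) (hcd _ _ (trilin_eps hK)) tev_add; congr (_ + _).
  rewrite (counit_r hC (fun a y1 => K (a + 1) r (dB C y1) m)) // => a.
  exact: lin_comp (dB_lin hC a) (bilin_linl hK (a + 1) r m).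
by apply: tev_ext => a c x1 x2 _; rewrite (tev_eps_comp hK).
Qed.

End FreeComodules.

Definition barcomp {k : fieldType} {B M M' M'' : int -> lmodType k} (C : dgcoalg B) (n : int)
    (G : forall p r s, B p -> M' r -> M'' s) (F : forall p r s, B p -> M r -> M' s) :
    forall p r s, B p -> M r -> M'' s :=
  fun p r s x m => tev (fun a c x1 x2 => sgn (n * a) *:
      G a (p + r + n - a) s x1 (F c r (p + r + n - a) x2 m)) (cop C x).

Section ComponentCalculus.
Context {k : fieldType} {B : int -> lmodType k} {C : dgcoalg B}.
Hypothesis hC : is_dgcoalg C.

Lemma comp_tcomp {M M' M'' : int -> lmodType k} {n1 n2 : int} {f : tmap B M M'}
    {g : tmap B M' M''} :
  is_comodmap C n1 f -> is_tmap n2 g -> forall p r s (x : B p) (m : M r),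
  comp_ C (tcomp n1 g f) p r s x m = barcomp C n1 (comp_ C g) (comp_ C f) p r s x m.
Proof.
move=> hcf hg p r s x m.
by rewrite {1}/comp_ /tcomp tev_text (tev_comodmap hC hcf (comp_bilin hC hg s)).
Qed.

Lemma comp_tmlin {M M' : int -> lmodType k} c (f g : tmap B M M') p r s (x : B p) (m : M r) :
  comp_ C (tmlin c f g) p r s x m = c *: comp_ C f p r s x m + comp_ C g p r s x m.
Proof.
rewrite /comp_ /tmlin tev_cat tev_tscale // => q t y.
exact: (bilin_linl (eps_gcast_bilin hC M' s)).
Qed.

Lemma comp_tdiff {M M' : int -> lmodType k} {n : int} {dM : tmap B M M}
    {dM' : tmap B M' M'} {f : tmap B M M'} :
  is_coder C dM -> is_tmap 1 dM' -> is_tmap n f -> is_comodmap C n f ->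
  forall p r s (x : B p) (m : M r),
  comp_ C (tdiff n dM dM' f) p r s x m
  = barcomp C n (comp_ C dM') (comp_ C f) p r s x m
    - sgn n *: (comp_ C f (p + 1) r s (dB C x) m
                + barcomp C 1 (comp_ C f) (comp_ C dM) p r s x m).
Proof.
move=> hcd hdM' hf hcf p r s x m.
rewrite {1}/comp_ /tdiff tev_cat tev_tscale; last first.
  by move=> *; apply: (bilin_linl (eps_gcast_bilin hC M' s)).
rewrite /tcomp !tev_text scaleNr (tev_comodmap hC hcf (comp_bilin hC hdM' s)).
rewrite (tev_coder hC hcd (comp_bilin hC hf s)).
by congr (_ - _ *: (_ + _)); apply: tev_ext => *; rewrite mul1r.
Qed.

Lemma comp_dM_sq {M : int -> lmodType k} {dM : tmap B M M} :
  is_freedgcomod C dM -> forall p r s (x : B p) (m : M r),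
  comp_ C dM (p + 1) r s (dB C x) m + barcomp C 1 (comp_ C dM) (comp_ C dM) p r s x m = 0.
Proof.
move=> hM p r s x m; have := dM_sq hM p r s x m _ _ (eps_gcast_bilin hC M s).
rewrite tev_nil /tcomp tev_text.
rewrite (tev_coder hC (dM_coder hM) (comp_bilin hC (dM_tmap hM) s)) => <-.
by congr (_ + _); apply: tev_ext => *; rewrite mul1r.
Qed.

End ComponentCalculus.

Definition compd {k : fieldType} {B M : int -> lmodType k} (C : dgcoalg B) (phi : ghom B M) :
  ghom B M := fun i j b => phi (i + 1) j (dB C b).

Section RightModule.
Context {k : fieldType} {B M : int -> lmodType k} {C : dgcoalg B}.
Hypothesis hC : is_dgcoalg C.

Lemma compd_ghom n (phi : ghom B M) : is_ghom n phi -> is_ghom (n + 1) (compd C phi).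
Proof.
move=> hp; split=> [i j|i j hj x]; first exact: lin_comp (dB_lin hC i) (ghom_lin hp _ _).
by rewrite /compd (ghom_deg hp) //; apply: contraNneq hj => ->; apply/eqP; ring.
Qed.

Lemma eq_act m (phi psi : ghom B M) (bs : dual B) :
  (forall i j x, phi i j x = psi i j x) ->
  forall i j b, act C m phi bs i j b = act C m psi bs i j b.
Proof. by move=> e i j b; apply: tev_ext => *; rewrite e. Qed.

Lemma act_ghom n m (phi : ghom B M) (bs : dual B) :
  is_ghom n phi -> is_dhom m bs -> is_ghom (n + m) (act C m phi bs).
Proof.
move=> hp hb; split => i j.
  apply: (cop_lin hC); apply: bilinP => p q y.
    exact/lin_scale/lin_scale/(ghom_lin hp).
  exact/lin_scale/lin_scalel/(dhom_lin hb).
move=> hj b; rewrite /act -(tev0 (cop C b)); apply: tev_ext => p q x y hq.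
have [hm|hm] := eqVneq (q + m) 0; last by rewrite (dhom_deg hb hm) !scale0r scaler0.
rewrite (ghom_deg hp) ?scaler0 //; move/eqP: hm => hm.
by apply: contraNneq hj => ->; apply/eqP; lia.
Qed.

Lemma actA n m1 m2 (phi : ghom B M) (b1 b2 : dual B) :
  is_ghom n phi -> is_dhom m1 b1 -> is_dhom m2 b2 -> forall i j b,
  act C m2 (act C m1 phi b1) b2 i j b = act C (m1 + m2) phi (dmul C b1 b2) i j b.
Proof.
move=> hp hb1 hb2 i j b.
pose H p' q' q (x1 : B p') (x2 : B q') (y : B q) :=
  ((sgn (m2 * (p' + q')) * sgn (m1 * p')) * (b1 q' x2 * b2 q y)) *: phi p' j x1.
have hH : trilin H.
  apply: trilinP => p' q' q * /=; rewrite /H.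
  - exact/lin_scale/(ghom_lin hp).
  - exact/lin_scalel/lin_mull/lin_mulr/(dhom_lin hb1).
  - exact/lin_scalel/lin_mull/lin_mull/(dhom_lin hb2).
rewrite /act.
transitivity (tev (fun p q x y => tev (fun p' q' x1 x2 => H p' q' q x1 x2 y) (cop C x))
                  (cop C b)).
  apply: tev_ext => p q x y hq; rewrite -!tev_scale; apply: tev_ext => p' q' x1 x2 hq'.
  rewrite /H (_ : p = p' + q'); last by lia.
  by rewrite !scalerA; congr (_ *: _); ring.
rewrite (coassoc hC) //; apply: tev_ext => p q x y hq.
rewrite /dmul tev_scalel -tev_scale; apply: tev_ext => p' q' y1 y2 hq'.
rewrite /H !scalerA; congr (_ *: _).
have [/eqP e1|e1] := eqVneq (p' + m1) 0; last by rewrite (dhom_deg hb1 e1) !(mul0r, mulr0).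
have [/eqP e2|e2] := eqVneq (q' + m2) 0; last by rewrite (dhom_deg hb2 e2) !(mul0r, mulr0).
have hs : sgn (m2 * (p + p')) * sgn (m1 * p) = sgn ((m1 + m2) * p) * sgn (p' * q') :> k.
  rewrite -!sgnD; apply: (sgn_mod2 _ _ (- (m1 * m2))).
  have -> : p' = - m1 by lia.
  have -> : q' = - m2 by lia.
  ring.
by rewrite [LHS]mulrA hs /GRing.scale /=; ring.
Qed.

Lemma act_eps n (phi : ghom B M) : is_ghom n phi -> forall i j b,
  act C 0 phi (@eps k B C) i j b = phi i j b.
Proof.
move=> hp i j b; rewrite /act -(counit_r hC (fun p x => phi p j x) (ghom_lin hp ^~ j)).
by apply: tev_ext => p q x y _; rewrite mul0r scale1r.
Qed.

Lemma act_glin m c (phi psi : ghom B M) (bs : dual B) i j b :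
  act C m (glin c phi psi) bs i j b = glin c (act C m phi bs) (act C m psi bs) i j b.
Proof.
rewrite /act /glin -tev_scale -tev_add; apply: tev_ext => p q x y _.
by rewrite !scalerDr !scalerA; congr (_ + _); congr (_ *: _); ring.
Qed.

Lemma act_dlin m c (phi : ghom B M) (b1 b2 : dual B) i j b :
  act C m phi (dlin c b1 b2) i j b = glin c (act C m phi b1) (act C m phi b2) i j b.
Proof.
rewrite /act /glin /dlin -tev_scale -tev_add; apply: tev_ext => p q x y _.
rewrite scalerDl scalerDr !scalerA; congr (_ + _); congr (_ *: _).
by rewrite /GRing.scale /=; ring.
Qed.

Lemma act_dB n m (phi : ghom B M) (bs : dual B) :
  is_ghom n phi -> is_dhom m bs -> forall i j b,
  compd C (act C m phi bs) i j b
  = sgn m *: (act C m (compd C phi) bs i j b - act C (m + 1) phi (ddual C bs) i j b).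
Proof.
move=> hp hb i j b; rewrite /compd /act (coder hC); last first.
  apply: bilinP => p q y; first exact/lin_scale/lin_scale/(ghom_lin hp).
  exact/lin_scale/lin_scalel/(dhom_lin hb).
rewrite scalerBr -scaleNr -!tev_scale tev_add; congr (_ + _).
  by apply: tev_ext => p q x y _; rewrite !scalerA mulrDr mulr1 [m * p + m]addrC sgnD.
apply: tev_ext => p q x y _; rewrite /ddual !scalerA.
have [/eqP e|e] := eqVneq (q + 1 + m) 0; last by rewrite (dhom_deg hb e) !(mulr0, scale0r).
have hs : sgn p * sgn (m * p) = - sgn m * sgn ((m + 1) * p) * sgn q :> k.
  rewrite -mulN1r -sgn1 -!sgnD (_ : q = - m - 1); last by lia.
  by apply: (sgn_mod2 _ _ 0); ring.
by rewrite hs; congr (_ *: _); ring.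
Qed.

End RightModule.

Section Transpose.
Context {k : fieldType} {B M M' : int -> lmodType k} {C : dgcoalg B}.

Lemma eq_fvee {F F' : forall p r s, B p -> M r -> M' s} :
  (forall p r s x m, F p r s x m = F' p r s x m) ->
  forall a (phi : ghom B M) i j b, fvee C F a phi i j b = fvee C F' a phi i j b.
Proof. by move=> e a phi i j b; apply: tev_ext => *; rewrite e. Qed.

Lemma fvee_add (F F' : forall p r s, B p -> M r -> M' s) a (phi : ghom B M) i j b :
  fvee C (fun p r s x m => F p r s x m + F' p r s x m) a phi i j b
  = fvee C F a phi i j b + fvee C F' a phi i j b.
Proof. by rewrite /fvee -tev_add; apply: tev_ext => *; rewrite scalerDr. Qed.

Lemma fvee_sub (F F' : forall p r s, B p -> M r -> M' s) a (phi : ghom B M) i j b :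
  fvee C (fun p r s x m => F p r s x m - F' p r s x m) a phi i j b
  = fvee C F a phi i j b - fvee C F' a phi i j b.
Proof. by rewrite /fvee -tev_sub; apply: tev_ext => *; rewrite scalerBr. Qed.

Lemma fvee_scale c (F : forall p r s, B p -> M r -> M' s) a (phi : ghom B M) i j b :
  fvee C (fun p r s x m => c *: F p r s x m) a phi i j b = c *: fvee C F a phi i j b.
Proof. by rewrite /fvee -tev_scale; apply: tev_ext => *; rewrite !scalerA mulrC. Qed.

Lemma fvee0 (F : forall p r s, B p -> M r -> M' s) :
  (forall p r s x m, F p r s x m = 0) ->
  forall a (phi : ghom B M) i j b, fvee C F a phi i j b = 0.
Proof. by move=> e a phi i j b; rewrite -(tev0 (cop C b)); apply: tev_ext => *; rewrite e scaler0. Qed.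

Lemma dveeE (F : forall p r s, B p -> M r -> M s) n (phi : ghom B M) i j b :
  dvee C F n phi i j b = fvee C F n phi i j b - sgn n *: compd C phi i j b.
Proof. by []. Qed.

Lemma dveeE_glin (F : forall p r s, B p -> M r -> M s) n (phi : ghom B M) i j b :
  dvee C F n phi i j b = glin (- sgn n) (compd C phi) (fvee C F n phi) i j b.
Proof. by rewrite dveeE /glin scaleNr addrC. Qed.

Hypothesis hC : is_dgcoalg C.
Context {F : forall p r s, B p -> M r -> M' s}.
Hypothesis hF : forall s, bilin (fun p r x m => F p r s x m).

Lemma eq_fvee_ghom a (phi psi : ghom B M) :
  (forall i j x, phi i j x = psi i j x) ->
  forall i j b, fvee C F a phi i j b = fvee C F a psi i j b.
Proof. by move=> e i j b; apply: tev_ext => *; rewrite e. Qed.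

Lemma fvee_ghom n a (phi : ghom B M) :
  (forall p r s x m, s != p + r + n -> F p r s x m = 0) ->
  is_ghom a phi -> is_ghom (a + n) (fvee C F a phi).
Proof.
move=> hdeg hp; split => i j.
  apply: (cop_lin hC); apply: bilinP => p q y.
    exact/lin_scale/(bilin_linl (hF j)).
  exact/lin_scale/(lin_comp (ghom_lin hp q (q + a)) (bilin_linr (hF j) p (q + a) y)).
move=> hj b; rewrite /fvee -(tev0 (cop C b)); apply: tev_ext => p q x y hq.
by rewrite hdeg ?scaler0 //; apply: contraNneq hj => ->; apply/eqP; lia.
Qed.

Lemma fvee_glin a c (phi psi : ghom B M) i j b :
  fvee C F a (glin c phi psi) i j b = glin c (fvee C F a phi) (fvee C F a psi) i j b.
Proof.
rewrite /fvee /glin -tev_scale -tev_add; apply: tev_ext => p q x y _.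
rewrite (linD (bilin_linr (hF j) _ _ _)) (linZ (bilin_linr (hF j) _ _ _)).
by rewrite scalerDr !scalerA mulrC.
Qed.

Lemma fvee_act a m (phi : ghom B M) (bs : dual B) : is_ghom a phi -> is_dhom m bs ->
  forall i j b, fvee C F (a + m) (act C m phi bs) i j b = act C m (fvee C F a phi) bs i j b.
Proof.
move=> hp hb i j b; rewrite /fvee /act.
pose H a' c d (x1 : B a') (x2 : B c) (y : B d) :=
  (sgn (m * (a' + c)) * sgn (a' * a) * bs d y) *: F a' (c + a) j x1 (phi c (c + a) x2).
have hH : trilin H.
  apply: trilinP => a' c d * /=; rewrite /H.
  - exact/lin_scale/(bilin_linl (hF j)).
  - exact/lin_scale/(lin_comp (ghom_lin hp _ _) (bilin_linr (hF j) _ _ _)).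
  - exact/lin_scalel/lin_mull/(dhom_lin hb).
symmetry; transitivity
  (tev (fun p q x y => tev (fun p' q' x1 x2 => H p' q' q x1 x2 y) (cop C x)) (cop C b)).
  apply: tev_ext => p q x y hq; rewrite -!tev_scale; apply: tev_ext => a' c x1 x2 hc.
  rewrite /H (_ : p = a' + c); last by lia.
  by rewrite !scalerA; congr (_ *: _); ring.
rewrite (coassoc hC) //; apply: tev_ext => p q x y hq.
rewrite (tev_lin _ _ (bilin_linr (hF j) _ _ _)) -tev_scale.
apply: tev_ext => p' q' y1 y2 hq'; rewrite /H.
have [/eqP e|e] := eqVneq (q' + m) 0; last first.
  rewrite (dhom_deg hb e) !scale0r mulr0 scale0r scaler0.
  by rewrite (lin0 (bilin_linr (hF j) _ _ _)) scaler0.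
have -> : q + (a + m) = p' + a by lia.
rewrite !(linZ (bilin_linr (hF j) _ _ _)) !scalerA; congr (_ *: _).
have hs : sgn (p * (a + m)) * sgn (m * p') = sgn (m * (p + p')) * sgn (p * a) :> k.
  by rewrite -!sgnD; apply: (sgn_mod2 _ _ 0); ring.
by rewrite -hs; ring.
Qed.

Lemma fvee_dB n (phi : ghom B M) : is_ghom n phi -> forall i j b,
  compd C (fvee C F n phi) i j b
  = sgn n *: fvee C (fun p r s x m => F (p + 1) r s (dB C x) m) n phi i j b
    + fvee C F (n + 1) (compd C phi) i j b.
Proof.
move=> hp i j b; rewrite /compd /fvee (coder hC); last first.
  apply: bilinP => p q y; first exact/lin_scale/(bilin_linl (hF j)).
  exact/lin_scale/(lin_comp (ghom_lin hp q (q + n)) (bilin_linr (hF j) p (q + n) y)).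
rewrite tev_add -tev_scale; congr (_ + _); apply: tev_ext => p q x y _.
  by rewrite scalerA -sgnD; congr (sgn _ *: _); ring.
have -> : q + 1 + n = q + (n + 1) by ring.
by rewrite scalerA -sgnD; congr (sgn _ *: _); ring.
Qed.

Section Composite.
Context {M'' : int -> lmodType k} {G : forall p r s, B p -> M' r -> M'' s}.
Hypothesis hG : forall s, bilin (fun p r x m => G p r s x m).

Lemma fvee_barcomp n a (phi : ghom B M) : is_ghom a phi -> forall i j b,
  fvee C (barcomp C n G F) a phi i j b = fvee C G (a + n) (fvee C F a phi) i j b.
Proof.
move=> hp i j b; rewrite /fvee /barcomp.
pose H a' c d (x1 : B a') (x2 : B c) (y : B d) :=
  (sgn ((a' + c) * a) * sgn (n * a')) *:
   G a' (c + d + a + n) j x1 (F c (d + a) (c + d + a + n) x2 (phi d (d + a) y)).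
have hH : trilin H.
  apply: trilinP => a' c d * /=; rewrite /H; apply: lin_scale.
  - exact: (bilin_linl (hG j)).
  - exact: (lin_comp (bilin_linl (hF _) _ _ _) (bilin_linr (hG j) _ _ _)).
  - exact: (lin_comp (ghom_lin hp _ _)
                     (lin_comp (bilin_linr (hF _) _ _ _) (bilin_linr (hG j) _ _ _))).
transitivity
  (tev (fun p q x y => tev (fun p' q' x1 x2 => H p' q' q x1 x2 y) (cop C x)) (cop C b)).
  apply: tev_ext => p q x y hq; rewrite -tev_scale; apply: tev_ext => a' c x1 x2 hc.
  rewrite /H (_ : p = a' + c); last by lia.
  have -> : a' + c + (q + a) + n - a' = c + q + a + n by ring.
  by rewrite scalerA.
rewrite (coassoc hC) //; apply: tev_ext => p q x y hq.
rewrite (tev_lin _ _ (bilin_linr (hG j) _ _ _)) -tev_scale.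
apply: tev_ext => p' q' y1 y2 hq'; rewrite /H (_ : q = p' + q'); last by lia.
rewrite (linZ (bilin_linr (hG j) _ _ _)) scalerA; congr (_ *: _).
  by rewrite -!sgnD; apply: (sgn_mod2 _ _ 0); ring.
by have -> : p' + q' + (a + n) = p' + q' + a + n by ring.
Qed.

End Composite.

End Transpose.

Section Differential.
Context {k : fieldType} {B M : int -> lmodType k} {C : dgcoalg B}.
Hypothesis hC : is_dgcoalg C.
Context {dM : tmap B M M}.
Hypothesis hM : is_freedgcomod C dM.
Local Notation dbar := (comp_ C dM).

Let hdbar := comp_bilin hC (dM_tmap hM).

Lemma dvee_ghom n (phi : ghom B M) : is_ghom n phi -> is_ghom (n + 1) (dvee C dbar n phi).
Proof.
move=> hp; apply: ghom_ext (fun i j b => esym (dveeE_glin _ _ _ i j b)) _.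
apply: glin_ghom; first exact: compd_ghom.
exact: (fvee_ghom hC hdbar _ _ _ (comp_deg hC (dM_tmap hM)) hp).
Qed.

Lemma dvee_glin n c (phi psi : ghom B M) i j b :
  dvee C dbar n (glin c phi psi) i j b = glin c (dvee C dbar n phi) (dvee C dbar n psi) i j b.
Proof.
rewrite /glin !dveeE (fvee_glin hdbar) /glin /compd.
by rewrite scalerBr scalerDr !scalerA [sgn n * c]mulrC opprD addrACA.
Qed.

Lemma dvee_sq n (phi : ghom B M) : is_ghom n phi -> forall i j b,
  dvee C dbar (n + 1) (dvee C dbar n phi) i j b = 0.
Proof.
move=> hp i j b.
have compd_dvee : compd C (dvee C dbar n phi) i j b = compd C (fvee C dbar n phi) i j b.
  by rewrite /compd dveeE /compd (dB_sq hC) (lin0 (ghom_lin hp _ _)) scaler0 subr0.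
rewrite dveeE compd_dvee (fvee_dB hC hdbar n phi hp) (eq_fvee_ghom _ _ _ (dveeE_glin _ _ _)).
rewrite (fvee_glin hdbar) /glin -(fvee_barcomp hC hdbar hdbar 1 n phi hp).
have -> : fvee C (barcomp C 1 dbar dbar) n phi i j b
          = - fvee C (fun p r s x m => dbar (p + 1) r s (dB C x) m) n phi i j b.
  apply/eqP; rewrite -subr_eq0 opprK addrC -fvee_add.
  by apply/eqP/fvee0 => *; exact: (comp_dM_sq hC hM).
set Y := fvee C _ n phi i j b; set Z := fvee C dbar (n + 1) _ i j b.
rewrite sgnD sgn1 mulrN1 !scaleNr opprK scalerDr scalerA sgnK scale1r.
by rewrite [Y + _]addrC addrACA !addNr addr0.
Qed.

Lemma dvee_leibniz n m (phi : ghom B M) (bs : dual B) :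
  is_ghom n phi -> is_dhom m bs -> forall i j b,
  dvee C dbar (n + m) (act C m phi bs) i j b
  = act C m (dvee C dbar n phi) bs i j b + sgn n *: act C (m + 1) phi (ddual C bs) i j b.
Proof.
move=> hp hb i j b.
rewrite dveeE (fvee_act hC hdbar _ _ _ _ hp hb) (act_dB hC _ _ _ _ hp hb).
rewrite (eq_act _ _ _ _ (dveeE_glin _ _ _)) act_glin /glin.
rewrite scalerA -sgnD (sgn_mod2 (n + m + m) n m); last by ring.
by rewrite scalerBr opprB scaleNr addrCA [RHS]addrC [- _ + _]addrC.
Qed.

End Differential.

Section Functor.
Context {k : fieldType} {B : int -> lmodType k} {C : dgcoalg B}.
Hypothesis hC : is_dgcoalg C.

Lemma vee_id {M : int -> lmodType k} a (phi : ghom B M) : is_ghom a phi ->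
  forall i j b, vee C (@tid _ B M) a phi i j b = phi i j b.
Proof.
move=> hp i j b; rewrite /vee /fvee.
transitivity (gcast j (phi i (i + a) b)); last first.
  have [e|ne] := eqVneq (i + a) j; first by rewrite e gcast_id.
  by rewrite gcast_ne // (ghom_deg hp) // eq_sym.
rewrite -(counit_l hC (fun q y => gcast j (phi q (q + a) y))); last first.
  by move=> q; apply: lin_comp (ghom_lin hp _ _) (gcast_lin _ _).
apply: tev_ext => p q x y hq; rewrite /comp_ /tid /tev big_seq1 /=.
have [e|ne] := eqVneq p 0; last by rewrite (eps_deg hC ne) !scale0r scaler0.
have -> : j - p = j by rewrite e subr0.
have -> : p * a = 0 by rewrite e mul0r.
by rewrite scale1r gcast_idem.
Qed.

Lemma vee_comp {M M' M'' : int -> lmodType k} {n1 n2 : int} {f : tmap B M M'}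
    {g : tmap B M' M''} :
  is_tmap n1 f -> is_comodmap C n1 f -> is_tmap n2 g ->
  forall a (phi : ghom B M), is_ghom a phi -> forall i j b,
  vee C (tcomp n1 g f) a phi i j b = vee C g (a + n1) (vee C f a phi) i j b.
Proof.
move=> hf hcf hg a phi hp i j b; rewrite /vee (eq_fvee (comp_tcomp hC hcf hg)).
exact: (fvee_barcomp hC (comp_bilin hC hf) (comp_bilin hC hg) _ _ _ hp).
Qed.

Lemma vee_tmlin {M M' : int -> lmodType k} c (f g : tmap B M M') a (phi : ghom B M) i j b :
  vee C (tmlin c f g) a phi i j b = c *: vee C f a phi i j b + vee C g a phi i j b.
Proof. by rewrite /vee (eq_fvee (comp_tmlin hC c f g)) fvee_add fvee_scale. Qed.

Lemma vee_tdiff {M M' : int -> lmodType k} {n : int} {dM : tmap B M M} {dM' : tmap B M' M'}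
    {f : tmap B M M'} :
  is_freedgcomod C dM -> is_freedgcomod C dM' -> is_tmap n f -> is_comodmap C n f ->
  forall a (phi : ghom B M), is_ghom a phi -> forall i j b,
  vee C (tdiff n dM dM' f) a phi i j b
  = dvee C (comp_ C dM') (a + n) (vee C f a phi) i j b
    - sgn n *: vee C f (a + 1) (dvee C (comp_ C dM) a phi) i j b.
Proof.
move=> hM hM' hf hcf a phi hp i j b.
have hfbar := comp_bilin hC hf.
have hdbar := comp_bilin hC (dM_tmap hM).
have hdbar' := comp_bilin hC (dM_tmap hM').
rewrite /vee (eq_fvee (comp_tdiff hC (dM_coder hM) (dM_tmap hM') hf hcf)).
rewrite fvee_sub fvee_scale fvee_add (fvee_barcomp hC hfbar hdbar' _ _ _ hp).
rewrite (fvee_barcomp hC hdbar hfbar _ _ _ hp) dveeE (fvee_dB hC hfbar _ _ hp).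
rewrite (eq_fvee_ghom _ _ _ (dveeE_glin _ _ _)) (fvee_glin hfbar) /glin.
rewrite -[in RHS]addrA -opprD; congr (_ - _).
rewrite sgnD !scalerDr !scalerA mulrN [sgn n * sgn a]mulrC scaleNr mulrAC sgnK mul1r.
by rewrite -addrA addNKr.
Qed.

End Functor.

Theorem proposition2p2 (k : fieldType) (B : int -> lmodType k) (C : dgcoalg B) :
  is_dgcoalg C ->
  (* Part 1: for every free dg-comodule (B (x) M, dM), d_M^vee makes Hom_gr(B, M)
     a right dg-module over (B^#, d) *)
  (forall (M : int -> lmodType k) (dM : tmap B M M), is_freedgcomod C dM ->
    let dv := dvee C (comp_ C dM) in
    [/\ (* right B^#-module structure given by phi . b^# *)
        forall n m (phi : ghom B M) (bs : dual B),
          is_ghom n phi -> is_dhom m bs -> is_ghom (n + m) (act C m phi bs),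
        forall n m1 m2 (phi : ghom B M) (b1 b2 : dual B),
          is_ghom n phi -> is_dhom m1 b1 -> is_dhom m2 b2 -> forall i j b,
          act C m2 (act C m1 phi b1) b2 i j b = act C (m1 + m2) phi (dmul C b1 b2) i j b,
        forall n (phi : ghom B M), is_ghom n phi -> forall i j b,
          act C 0 phi (@eps k B C) i j b = phi i j b,
        forall n m c (phi psi : ghom B M) (bs : dual B),
          is_ghom n phi -> is_ghom n psi -> is_dhom m bs -> forall i j b,
          act C m (glin c phi psi) bs i j b = glin c (act C m phi bs) (act C m psi bs) i j b
      & forall n m c (phi : ghom B M) (b1 b2 : dual B),
          is_ghom n phi -> is_dhom m b1 -> is_dhom m b2 -> forall i j b,
          act C m phi (dlin c b1 b2) i j b = glin c (act C m phi b1) (act C m phi b2) i j b]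
    /\
    [/\ (* d_M^vee is linear, of degree 1, squares to zero *)
        forall n (phi : ghom B M), is_ghom n phi -> is_ghom (n + 1) (dv n phi),
        forall n c (phi psi : ghom B M), is_ghom n phi -> is_ghom n psi -> forall i j b,
          dv n (glin c phi psi) i j b = glin c (dv n phi) (dv n psi) i j b,
        forall n (phi : ghom B M), is_ghom n phi -> forall i j b,
          dv (n + 1) (dv n phi) i j b = 0
      & (* Leibniz rule *)
        forall n m (phi : ghom B M) (bs : dual B),
          is_ghom n phi -> is_dhom m bs -> forall i j b,
          dv (n + m) (act C m phi bs) i j b
          = act C m (dv n phi) bs i j b + sgn n *: act C (m + 1) phi (ddual C bs) i j b])
  /\
  (* Part 2: f |-> f^vee is a dg-functor *)
  (forall (M M' M'' : int -> lmodType k) (dM : tmap B M M) (dM' : tmap B M' M')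
          (dM'' : tmap B M'' M''),
    is_freedgcomod C dM -> is_freedgcomod C dM' -> is_freedgcomod C dM'' ->
    [/\ (* f^vee is a morphism of right B^#-modules of degree deg f *)
        forall n (f : tmap B M M'), is_tmap n f -> is_comodmap C n f ->
          [/\ forall a (phi : ghom B M), is_ghom a phi -> is_ghom (a + n) (vee C f a phi),
              forall a c (phi psi : ghom B M), is_ghom a phi -> is_ghom a psi ->
                forall i j b,
                vee C f a (glin c phi psi) i j b = glin c (vee C f a phi) (vee C f a psi) i j b
            & forall a m (phi : ghom B M) (bs : dual B), is_ghom a phi -> is_dhom m bs ->
                forall i j b,
                vee C f (a + m) (act C m phi bs) i j b = act C m (vee C f a phi) bs i j b],
        (* compatibility with composition *)
        forall n1 n2 (f : tmap B M M') (g : tmap B M' M''),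
          is_tmap n1 f -> is_comodmap C n1 f -> is_tmap n2 g -> is_comodmap C n2 g ->
          forall a (phi : ghom B M), is_ghom a phi -> forall i j b,
          vee C (tcomp n1 g f) a phi i j b = vee C g (a + n1) (vee C f a phi) i j b,
        (* identities *)
        forall a (phi : ghom B M), is_ghom a phi -> forall i j b,
          vee C (tid) a phi i j b = phi i j b,
        (* compatibility with the differentials of the Hom complexes *)
        forall n (f : tmap B M M'), is_tmap n f -> is_comodmap C n f ->
          forall a (phi : ghom B M), is_ghom a phi -> forall i j b,
          vee C (tdiff n dM dM' f) a phi i j b
          = dvee C (comp_ C dM') (a + n) (vee C f a phi) i j b
            - sgn n *: vee C f (a + 1) (dvee C (comp_ C dM) a phi) i j b
      & (* linearity on Hom complexes *)
        forall n c (f g : tmap B M M'),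
          is_tmap n f -> is_comodmap C n f -> is_tmap n g -> is_comodmap C n g ->
          forall a (phi : ghom B M), is_ghom a phi -> forall i j b,
          vee C (tmlin c f g) a phi i j b = c *: vee C f a phi i j b + vee C g a phi i j b]).
Proof.
move=> hC; split=> [M dM hM dv | M M' M'' dM dM' dM'' hM hM' _].
  split; split.
  - exact: act_ghom.
  - exact: (actA hC).
  - exact: (act_eps hC).
  - by move=> *; apply: act_glin.
  - by move=> *; apply: act_dlin.
  - exact: (dvee_ghom hC hM).
  - by move=> *; apply: dvee_glin.
  - exact: (dvee_sq hC hM).
  - exact: (dvee_leibniz hC hM).
split.
- move=> n f hf hcf; have hfbar := comp_bilin hC hf; split.
  + by move=> a phi; apply: (fvee_ghom hC hfbar _ _ _ (comp_deg hC hf)).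
  + by move=> *; apply: fvee_glin.
  + by move=> *; apply: (fvee_act hC hfbar).
- by move=> n1 n2 f g hf hcf hg _; exact: (vee_comp hC hf hcf hg).
- exact: (vee_id hC).
- by move=> n f hf hcf; exact: (vee_tdiff hC hM hM' hf hcf).
- by move=> *; apply: (vee_tmlin hC).
Qed.
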